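(* Let $\Gamma$ be a finitely generated linear group whose centre is trivial. Then $\Gamma$ is uniquely directly decomposable.
   Context: A group is linear if it is a subgroup of $\mathrm{GL}_d(K)$ for some integer $d$ and field $K$. A group is indecomposable if it is nontrivial and, for every isomorphism with a direct product $\Gamma_1\times\Gamma_2$, one factor is trivial. A group is uniquely directly decomposable if it is isomorphic to a restricted direct sum of indecomposable groups, and this in a unique way up to isomorphism of the factors (i.e. any two such decompositions have factors that can be matched bijectively with isomorphic matched factors). The trivial group counts as uniquely directly decomposable (empty sum). *)

(* abstract groups
   are given by an explicit record since MathComp has no infinite groups. *)
From Stdlib Require Lists.List.
From mathcomp Require Import all_boot all_algebra.
Set Implicit Arguments. Unset Strict Implicit. Unset Printing Implicit Defensive.
Import GRing.Theory.

Record group := Group {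
  carrier :> Type;
  gmul : carrier -> carrier -> carrier;
  gone : carrier;
  ginv : carrier -> carrier;
  gmulA : forall x y z, gmul x (gmul y z) = gmul (gmul x y) z;
  gmul1l : forall x, gmul gone x = x;
  gmul1r : forall x, gmul x gone = x;
  gmulVl : forall x, gmul (ginv x) x = gone;
  gmulVr : forall x, gmul x (ginv x) = gone
}.

Definition is_hom (G H : group) (f : G -> H) : Prop :=
  forall x y, f (gmul x y) = gmul (f x) (f y).

Definition bijective_map (A B : Type) (f : A -> B) : Prop :=
  (forall x y, f x = f y -> x = y) /\ (forall b, exists a, f a = b).

Definition group_iso (G H : group) : Prop :=
  exists f : G -> H, is_hom f /\ bijective_map f.

Definition trivial_group (G : group) : Prop := forall x : G, x = gone G.

Definition linear_group (G : group) : Prop :=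
  exists (K : fieldType) (d : nat) (rho : G -> 'M[K]_d),
    (forall x y, rho x = rho y -> x = y) /\
    (forall x, rho x \in unitmx) /\
    (forall x y, rho (gmul x y) = (rho x *m rho y)%R).

Inductive generated (G : group) (S : G -> Prop) : G -> Prop :=
  | gen_base x : S x -> generated S x
  | gen_one : generated S (gone G)
  | gen_mul x y : generated S x -> generated S y -> generated S (gmul x y)
  | gen_inv x : generated S x -> generated S (ginv x).

Definition finitely_generated (G : group) : Prop :=
  exists s : list G, forall x, generated (fun y => Stdlib.Lists.List.In y s) x.

Definition trivial_centre (G : group) : Prop :=
  forall z : G, (forall x, gmul z x = gmul x z) -> z = gone G.

Definition iso_direct_product (G G1 G2 : group) : Prop :=
  exists f : G -> (G1 * G2)%type,
    (forall x y, f (gmul x y) = (gmul (f x).1 (f y).1, gmul (f x).2 (f y).2)) /\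
    bijective_map f.

Definition indecomposable (G : group) : Prop :=
  ~ trivial_group G /\
  forall G1 G2 : group, iso_direct_product G G1 G2 ->
    trivial_group G1 \/ trivial_group G2.

Definition fin_support (I : Type) (H : I -> group) (f : forall i, H i) : Prop :=
  exists s : list I, forall i, ~ Stdlib.Lists.List.In i s -> f i = gone (H i).

(* G is isomorphic to the restricted direct sum of the family H: a
   homomorphism into the full product (pointwise operations), injective,
   with image exactly the finitely supported elements. *)
Definition iso_restricted_sum (G : group) (I : Type) (H : I -> group) : Prop :=
  exists phi : G -> forall i, H i,
    (forall x y, phi (gmul x y) = (fun i => gmul (phi x i) (phi y i))) /\
    (forall x y, phi x = phi y -> x = y) /\
    (forall f, fin_support f <-> exists x, phi x = f).

Definition direct_decomposition (G : group) (I : Type) (H : I -> group) : Prop :=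
  (forall i, indecomposable (H i)) /\ iso_restricted_sum G H.

Definition uniquely_directly_decomposable (G : group) : Prop :=
  (exists (I : Type) (H : I -> group), direct_decomposition G H) /\
  forall (I : Type) (H : I -> group) (J : Type) (K : J -> group),
    direct_decomposition G H -> direct_decomposition G K ->
    exists sigma : I -> J, bijective_map sigma /\
      forall i, group_iso (H i) (K (sigma i)).

From Pilot Require Import Defs.
From mathcomp Require Import all_boot all_algebra.
From Stdlib Require Import Classical ClassicalDescription ProofIrrelevance.
From Stdlib Require Import FunctionalExtensionality ClassicalEpsilon.

(* Encode a direct decomposition of G by the projections onto its factors:
   mutually orthogonal idempotent endomorphisms that jointly separate points.
   If G is centreless, an element commuting with the kernel of a projection
   lies in its image.  Hence a projection Q_j of a second decomposition maps
   each factor A_i of the first one into itself and splits it as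
   (A_i ∩ im Q_j) x (A_i ∩ ker Q_j); when A_i is indecomposable it is fixed
   pointwise by some Q_j, and comparing in both directions shows that the
   factors of the two decompositions coincide.
   For existence, let G embed in GL_d(K) and have a decomposition with n
   nontrivial factors.  Each factor is centreless, so it contains
   non-commuting s_l, t_l; the matrix of s_l commutes with that of t_m
   exactly when l <> m, which makes the matrices of the s_l linearly
   independent, so n <= d^2.  Hence some decomposition has the largest number
   of nontrivial factors, and its factors are indecomposable. *)

Set Implicit Arguments.
Unset Strict Implicit.

Section NoncommutingPairs.
Import GRing.Theory.
Local Open Scope ring_scope.

Lemma noncommuting_pairs_le_sqr (K : fieldType) (d n : nat) (S T : nat -> 'M[K]_d) :
  (forall l m, (l < n)%N -> (m < n)%N -> l <> m -> S m *m T l = T l *m S m) ->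
  (forall l, (l < n)%N -> S l *m T l <> T l *m S l) -> (n <= d * d)%N.
Proof.
move=> commST ncommST.
pose X : n.-tuple 'M[K]_d := [tuple S i | i < n].
have freeX : free X.
  apply/freeP => k sumX0 i.
  (* Commutation with T i kills every S m except S i. *)
  have := congr1 (fun M => M *m T i - T i *m M) sumX0.
  rewrite mul0mx mulmx0 subrr mulmx_suml mulmx_sumr -sumrB.
  rewrite (bigD1 i) //= big1 ?addr0.
    rewrite !nth_mktuple -scalemxAl -scalemxAr -scalerBr => /eqP.
    rewrite scaler_eq0 subr_eq0 => /orP [/eqP // | /eqP comm_i].
    by case: (ncommST i (ltn_ord i)).
  move=> j neq_ji; rewrite !nth_mktuple -scalemxAl -scalemxAr.
  rewrite commST ?ltn_ord ?subrr ?scaler0 // => eq_ij.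
  by case/eqP: neq_ji; apply: val_inj.
move: freeX; rewrite /free size_tuple => /eqP <-.
by apply: leq_trans (dimvS (subvf _)) _; rewrite dimvf dim_matrix.
Qed.

End NoncommutingPairs.

Local Notation "x ** y" := (gmul x y) (at level 40, left associativity).
Local Notation "1" := (gone _).

Section GroupLemmas.
Variable G : group.
Implicit Types x y z : G.

Lemma mulKg x y : ginv x ** (x ** y) = y.
Proof. by rewrite gmulA gmulVl gmul1l. Qed.

Lemma mulVKg x y : x ** (ginv x ** y) = y.
Proof. by rewrite gmulA gmulVr gmul1l. Qed.

Lemma mulg_cancl x y z : x ** y = x ** z -> y = z.
Proof. by move=> eq_xy_xz; rewrite -(mulKg x y) eq_xy_xz mulKg. Qed.

Lemma invg_uniq x y : x ** y = 1 -> y = ginv x.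
Proof. by move=> xy1; apply: (@mulg_cancl x); rewrite xy1 gmulVr. Qed.

Lemma invgK x : ginv (ginv x) = x.
Proof. by symmetry; apply: invg_uniq; rewrite gmulVl. Qed.

Lemma invg1 : ginv (gone G) = 1.
Proof. by symmetry; apply: invg_uniq; rewrite gmul1l. Qed.

Lemma invgM x y : ginv (x ** y) = ginv y ** ginv x.
Proof.
by symmetry; apply: invg_uniq; rewrite -gmulA (gmulA y) gmulVr gmul1l gmulVr.
Qed.

Lemma divg_eq1 x y : ginv x ** y = 1 -> x = y.
Proof. by move/invg_uniq ->; rewrite invgK. Qed.

Definition gcommute x y := x ** y = y ** x.

Lemma gcommute_sym x y : gcommute x y -> gcommute y x.
Proof. by []. Qed.

Lemma gcommuteM x y z : gcommute x z -> gcommute y z -> gcommute (x ** y) z.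
Proof. by move=> cxz cyz; rewrite /gcommute -gmulA cyz gmulA cxz gmulA. Qed.

Lemma gcommuteV x z : gcommute x z -> gcommute (ginv x) z.
Proof.
move=> cxz; apply: (@mulg_cancl x); rewrite mulVKg gmulA cxz -gmulA.
by rewrite gmulVr gmul1r.
Qed.

End GroupLemmas.

Section Homomorphisms.
Variables (G H : group) (f : G -> H).
Hypothesis fM : is_hom f.

Lemma hom1 : f 1 = 1.
Proof. by apply: (@mulg_cancl _ (f 1)); rewrite -fM !gmul1r. Qed.

Lemma homV x : f (ginv x) = ginv (f x).
Proof. by apply: invg_uniq; rewrite -fM gmulVr hom1. Qed.

End Homomorphisms.

Lemma bijective_mapE (A B : Type) (f : A -> B) : bijective_map f <-> bijective f.
Proof.
split=> [[f_inj f_onto] | [g fK gK]]; last first.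
  split=> [x y /(congr1 g) | b]; [by rewrite !fK | by exists (g b)].
have [g gK] := choice _ f_onto.
by exists g => // x; apply: f_inj; rewrite gK.
Qed.

Lemma group_iso_sym (G H : group) : group_iso G H -> group_iso H G.
Proof.
move=> [f [fM /bijective_mapE [g fK gK]]].
exists g; split; last by apply/bijective_mapE; exists f.
by move=> x y; apply: (can_inj fK); rewrite fM !gK.
Qed.

Lemma group_iso_trans (G H K : group) :
  group_iso G H -> group_iso H K -> group_iso G K.
Proof.
move=> [f [fM /bijective_mapE f_bij]] [g [gM /bijective_mapE g_bij]].
exists (g \o f); split; last exact/bijective_mapE/bij_comp.
by move=> x y /=; rewrite fM gM.
Qed.

Lemma indecomposable_iso (G H : group) :
  group_iso G H -> indecomposable G -> indecomposable H.
Proof.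
move=> [f [fM /bijective_mapE [g fK gK]]] [G_nontriv G_indec]; split.
  move=> H_triv; apply: G_nontriv => x.
  by rewrite -(fK x) (H_triv (f x)) -(hom1 fM) fK.
move=> G1 G2 [h [hM /bijective_mapE h_bij]]; apply: G_indec.
exists (h \o f); split; last by apply/bijective_mapE/bij_comp => //; exists g.
by move=> x y /=; rewrite fM hM.
Qed.

Lemma sval_inj (A : Type) (P : A -> Prop) (a b : {x | P x}) : sval a = sval b -> a = b.
Proof. by apply: eq_sig_hprop => x; apply: proof_irrelevance. Qed.

Record subgroup (G : group) := Subgroup {
  sg_mem :> G -> Prop;
  sg_mem1 : sg_mem 1;
  sg_memM : forall x y, sg_mem x -> sg_mem y -> sg_mem (x ** y);
  sg_memV : forall x, sg_mem x -> sg_mem (ginv x) }.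

Definition subgroup_group (G : group) (S : subgroup G) : group.
Proof.
refine (@Defs.Group {x | S x}
  (fun a b => exist S (sval a ** sval b) (sg_memM (svalP a) (svalP b)))
  (exist S 1 (sg_mem1 S))
  (fun a => exist S (ginv (sval a)) (sg_memV (svalP a))) _ _ _ _ _)
  => *; apply: sval_inj => /=.
- exact: gmulA.
- exact: gmul1l.
- exact: gmul1r.
- exact: gmulVl.
- exact: gmulVr.
Defined.

Definition subgroupI (G : group) (S T : subgroup G) : subgroup G.
Proof.
refine (@Subgroup G (fun x => S x /\ T x) _ _ _).
- by split; apply: sg_mem1.
- by move=> x y [Sx Tx] [Sy Ty]; split; apply: sg_memM.
- by move=> x [Sx Tx]; split; apply: sg_memV.
Defined.

Section FixAndKernel.
Variables (G : group) (f : G -> G).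
Hypothesis fM : is_hom f.

Definition fix_subgroup : subgroup G.
Proof.
refine (@Subgroup G (fun x => f x = x) (hom1 fM) _ _).
- by move=> x y fx fy; rewrite fM fx fy.
- by move=> x fx; rewrite (homV fM) fx.
Defined.

Definition ker_subgroup : subgroup G.
Proof.
refine (@Subgroup G (fun x => f x = 1) (hom1 fM) _ _).
- by move=> x y fx fy; rewrite fM fx fy gmul1l.
- by move=> x fx; rewrite (homV fM) fx invg1.
Defined.

End FixAndKernel.

(* With infinitely many factors, [proj_ext] only makes G a subdirect product
   of the images; the uniqueness argument needs no more. *)
Record projection_family (G : group) (I : Type) (P : I -> G -> G) : Prop := {
  proj_hom : forall i, is_hom (P i);
  proj_idem : forall i x, P i (P i x) = P i x;
  proj_orth : forall i j x, i <> j -> P i (P j x) = 1;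
  proj_ext : forall x y, (forall i, P i x = P i y) -> x = y }.

Section ProjectionFamily.
Variables (G : group) (I : Type) (P : I -> G -> G).
Hypothesis D : projection_family P.

Definition proj_image i : group := subgroup_group (fix_subgroup (proj_hom D i)).

Lemma proj_gone i : P i 1 = 1.
Proof. exact: hom1 (proj_hom D i). Qed.

Lemma proj_ker_part i x : P i (ginv (P i x) ** x) = 1.
Proof. by rewrite (proj_hom D) (homV (proj_hom D i)) (proj_idem D) gmulVl. Qed.

Lemma gcommute_fix_ker i z y : P i z = z -> P i y = 1 -> gcommute z y.
Proof.
move=> Pz Py; apply: (proj_ext D) => j; rewrite !(proj_hom D).
have [-> | neq_ji] := classic (j = i); first by rewrite Pz Py gmul1l gmul1r.
by rewrite -Pz (proj_orth D) // gmul1l gmul1r.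
Qed.

Lemma gcommute_proj i j x y : i <> j -> gcommute (P i x) (P j y).
Proof.
move=> neq_ij; apply: gcommute_sym; apply: (@gcommute_fix_ker j).
  exact: (proj_idem D).
by apply: (proj_orth D) => eq_ji; apply: neq_ij.
Qed.

Lemma proj_image_nontrivialP i :
  ~ trivial_group (proj_image i) <-> exists x, P i x <> 1.
Proof.
split=> [nontriv | [x nx1] triv].
  have [[x Px] nx1] := not_all_ex_not _ _ nontriv.
  by exists x; rewrite Px => x1; apply: nx1; apply: sval_inj.
by apply: nx1; have /(congr1 sval) := triv (exist _ (P i x) (proj_idem D i x)).
Qed.

Lemma proj_fix_of_centralises i z : trivial_centre G ->
  (forall y, P i y = 1 -> gcommute z y) -> P i z = z.
Proof.
move=> tc cz; apply: divg_eq1; apply: tc => g.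
rewrite -[g](mulVKg (P i g)); apply: gcommute_sym; apply: gcommuteM.
  apply: (@gcommute_fix_ker i); first exact: (proj_idem D).
  exact: proj_ker_part.
apply: gcommute_sym; apply: gcommuteM; last by apply: cz; apply: proj_ker_part.
apply: gcommuteV; apply: (@gcommute_fix_ker i); first exact: (proj_idem D).
exact: proj_ker_part.
Qed.

Lemma proj_noncommutative i x : trivial_centre G -> P i x <> 1 ->
  exists y, ~ gcommute (P i x) (P i y).
Proof.
move=> tc nx1; apply: NNPP => all_comm; apply: nx1; apply: tc => g.
rewrite -[g](mulVKg (P i g)); apply: gcommute_sym; apply: gcommuteM.
  by apply: gcommute_sym; apply: NNPP => ncomm; apply: all_comm; exists g.
apply: gcommute_sym; apply: (@gcommute_fix_ker i); first exact: (proj_idem D).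
exact: proj_ker_part.
Qed.

Lemma subgroup_direct_product (S : subgroup G) i :
  (forall x, S x -> S (P i x)) ->
  iso_direct_product (subgroup_group S)
    (subgroup_group (subgroupI S (fix_subgroup (proj_hom D i))))
    (subgroup_group (subgroupI S (ker_subgroup (proj_hom D i)))).
Proof.
move=> SP; pose k x := ginv (P i x) ** x.
have Sk x : S x -> S (k x) by move=> Sx; apply: sg_memM => //; apply/sg_memV/SP.
pose f (a : subgroup_group S) :
  subgroup_group (subgroupI S (fix_subgroup (proj_hom D i))) *
  subgroup_group (subgroupI S (ker_subgroup (proj_hom D i))) :=
  (exist _ (P i (sval a)) (conj (SP _ (svalP a)) (proj_idem D i (sval a))),
   exist _ (k (sval a)) (conj (Sk _ (svalP a)) (proj_ker_part i (sval a)))).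
exists f; split.
  move=> [x Sx] [y Sy]; congr pair; apply: sval_inj => /=.
    exact: (proj_hom D).
  have cyx : gcommute (ginv (P i y)) (k x).
    apply/gcommuteV/(@gcommute_fix_ker i); first exact: (proj_idem D).
    exact: proj_ker_part.
  by rewrite /k (proj_hom D) invgM !gmulA -cyx !gmulA.
split.
  move=> [x Sx] [y Sy] /(congr1 (fun p => (sval p.1, sval p.2))) [Pxy kxy].
  apply: sval_inj => /=.
  by rewrite -(mulVKg (P i x) x) -(mulVKg (P i y) y) -/(k x) -/(k y) Pxy kxy.
move=> [[u [Su Pu]] [v [Sv Pv]]].
have Puv : P i (u ** v) = u by rewrite (proj_hom D) Pu Pv gmul1r.
exists (exist _ (u ** v) (sg_memM Su Sv)); congr pair; apply: sval_inj => /=.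
  exact: Puv.
by rewrite /k Puv mulKg.
Qed.

End ProjectionFamily.

Section TwoProjectionFamilies.
Variables (G : group) (I J : Type) (P : I -> G -> G) (Q : J -> G -> G).
Hypotheses (DP : projection_family P) (DQ : projection_family Q).

Lemma proj_image_iso_of_fix i j :
  (forall x, Q j (P i x) = P i x) -> (forall y, P i (Q j y) = Q j y) ->
  group_iso (proj_image DP i) (proj_image DQ j).
Proof.
move=> QP PQ.
have fixQ (a : proj_image DP i) : Q j (sval a) = sval a.
  by have Pa : P i (sval a) = sval a := svalP a; rewrite -Pa QP.
have fixP (b : proj_image DQ j) : P i (sval b) = sval b.
  by have Qb : Q j (sval b) = sval b := svalP b; rewrite -Qb PQ.
exists (fun a => exist _ (sval a) (fixQ a) : proj_image DQ j); split.
  by move=> a b; apply: sval_inj.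
split=> [a b /(congr1 sval) /= eq_ab | b]; first exact: sval_inj.
by exists (exist _ (sval b) (fixP b) : proj_image DP i); apply: sval_inj.
Qed.

Hypothesis tc : trivial_centre G.

Lemma proj_fix_proj i j x : P i (Q j (P i x)) = Q j (P i x).
Proof.
apply: (proj_fix_of_centralises DP) => // y Py.
have cxy : gcommute (P i x) y := gcommute_fix_ker DP (proj_idem DP i x) Py.
rewrite -[y](mulVKg (Q j y)); apply: gcommute_sym; apply: gcommuteM.
  by rewrite /gcommute -!(proj_hom DQ) cxy.
apply: gcommute_sym; apply: (gcommute_fix_ker DQ); first exact: (proj_idem DQ).
exact: (proj_ker_part DQ).
Qed.

Lemma proj_fix_of_indecomposable i :
  indecomposable (proj_image DP i) -> exists j, forall x, Q j (P i x) = P i x.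
Proof.
move=> [nontriv indec].
have [x0 nx0] := (proj_image_nontrivialP DP i).1 nontriv.
have [j nQx0] : exists j, Q j (P i x0) <> 1.
  apply: NNPP => all1; apply: nx0; apply: (proj_ext DQ) => j.
  by rewrite (proj_gone DQ); apply: NNPP => nQ; apply: all1; exists j.
exists j.
have Q_stable x : fix_subgroup (proj_hom DP i) x -> P i (Q j x) = Q j x.
  by move=> /= Px; rewrite -Px proj_fix_proj.
have [triv | triv] := indec _ _ (subgroup_direct_product DQ Q_stable).
  have QPx0 : P i (Q j (P i x0)) = Q j (P i x0) /\ Q j (Q j (P i x0)) = Q j (P i x0).
    by split; [exact: proj_fix_proj | exact: (proj_idem DQ)].
  by case: nQx0; have /(congr1 sval) := triv (exist _ _ QPx0).
move=> x; set y := P i x; set w := ginv (Q j y) ** y.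
have Sw : P i w = w /\ Q j w = 1.
  split; last exact: (proj_ker_part DQ).
  by rewrite /w (proj_hom DP) (homV (proj_hom DP i)) proj_fix_proj (proj_idem DP).
by apply: divg_eq1; have /(congr1 sval) := triv (exist _ _ Sw).
Qed.

End TwoProjectionFamilies.

Lemma projection_family_unique (G : group) (I J : Type)
    (P : I -> G -> G) (Q : J -> G -> G)
    (DP : projection_family P) (DQ : projection_family Q) :
  trivial_centre G ->
  (forall i, indecomposable (proj_image DP i)) ->
  (forall j, indecomposable (proj_image DQ j)) ->
  exists sigma : I -> J, bijective_map sigma /\
    forall i, group_iso (proj_image DP i) (proj_image DQ (sigma i)).
Proof.
move=> tc indP indQ.
have [sigma QP] := choice _ (fun i => proj_fix_of_indecomposable DQ tc (indP i)).
have [tau PQ] := choice _ (fun j => proj_fix_of_indecomposable DP tc (indQ j)).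
have sigmaK : cancel sigma tau.
  move=> i; apply: NNPP => neq.
  have [x] := (proj_image_nontrivialP DP i).1 (indP i).1; apply.
  by rewrite -(QP i x) -(PQ (sigma i)) (QP i x) (proj_orth DP).
have tauK : cancel tau sigma.
  move=> j; apply: NNPP => neq.
  have [y] := (proj_image_nontrivialP DQ j).1 (indQ j).1; apply.
  by rewrite -(PQ j y) -(QP (tau j)) (PQ j y) (proj_orth DQ).
exists sigma; split; first by apply/bijective_mapE; exists tau.
move=> i; apply: proj_image_iso_of_fix (QP i) _ => y.
by rewrite -{1}(sigmaK i) PQ.
Qed.

Section RestrictedSum.
Variables (G : group) (I : Type) (H : I -> group) (phi : G -> forall i, H i).
Hypotheses (phiM : forall x y, phi (x ** y) = (fun i => phi x i ** phi y i))
  (phi_inj : forall x y, phi x = phi y -> x = y)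
  (phi_onto : forall f, fin_support f -> exists x, phi x = f).

Definition single i (h : H i) : forall k, H k := fun k =>
  match excluded_middle_informative (i = k) with
  | left eq_ik => eq_rect i H h k eq_ik
  | right _ => 1
  end.

Lemma single_at i h : @single i h i = h.
Proof.
rewrite /single; case: excluded_middle_informative => [eq_ii | []] //.
by rewrite (proof_irrelevance _ eq_ii erefl).
Qed.

Lemma single_off i h k : i <> k -> @single i h k = 1.
Proof. by rewrite /single; case: excluded_middle_informative. Qed.

Lemma fin_support_single i h : fin_support (@single i h).
Proof. by exists (i :: nil) => k not_ik; apply: single_off => eq_ik; apply: not_ik; left. Qed.

Definition emb i (h : H i) : G :=
  sval (constructive_indefinite_description _ (phi_onto (fin_support_single h))).

Lemma phi_emb i h : phi (@emb i h) = single h.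
Proof. by rewrite /emb; case: constructive_indefinite_description. Qed.

Lemma phi_emb_at i h : phi (@emb i h) i = h.
Proof. by rewrite phi_emb single_at. Qed.

Lemma phi_emb_off i h k : i <> k -> phi (@emb i h) k = 1.
Proof. by move=> neq_ik; rewrite phi_emb single_off. Qed.

Lemma embM i : is_hom (@emb i).
Proof.
move=> a b; apply: phi_inj; apply: functional_extensionality_dep => k.
rewrite phiM; have [<- | neq_ik] := classic (i = k); first by rewrite !phi_emb_at.
by rewrite !phi_emb_off // gmul1l.
Qed.

Lemma emb_inj i (a b : H i) : emb a = emb b -> a = b.
Proof. by move=> eq_ab; rewrite -(phi_emb_at a) eq_ab phi_emb_at. Qed.

Definition coord_proj i x := @emb i (phi x i).

Lemma coord_projection_family : projection_family coord_proj.
Proof.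
split.
- by move=> i x y; rewrite /coord_proj phiM embM.
- by move=> i x; rewrite /coord_proj phi_emb_at.
- move=> i j x neq_ij; rewrite /coord_proj phi_emb_off; first exact: hom1 (@embM i).
  by move=> eq_ji; apply: neq_ij.
- move=> x y eq_xy; apply: phi_inj; apply: functional_extensionality_dep => i.
  by apply: (@emb_inj i); apply: eq_xy.
Qed.

Lemma coord_proj_image_iso i :
  group_iso (H i) (proj_image coord_projection_family i).
Proof.
have fix_emb (h : H i) : coord_proj i (emb h) = emb h by rewrite /coord_proj phi_emb_at.
exists (fun h => exist _ (emb h) (fix_emb h) : proj_image coord_projection_family i).
split; first by move=> a b; apply: sval_inj; apply: embM.
split=> [a b /(congr1 sval) /emb_inj // | b].
by exists (phi (sval b) i); apply: sval_inj; apply: (svalP b).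
Qed.

End RestrictedSum.

Lemma restricted_sum_projections (G : group) (I : Type) (H : I -> group) :
  iso_restricted_sum G H ->
  exists (P : I -> G -> G) (D : projection_family P),
    forall i, group_iso (H i) (proj_image D i).
Proof.
move=> [phi [phiM [phi_inj phi_fin]]].
have phi_onto f : fin_support f -> exists x, phi x = f by move/phi_fin.
by exists (coord_proj phi_onto), (coord_projection_family phiM phi_inj phi_onto);
  apply: coord_proj_image_iso.
Qed.

Lemma direct_decomposition_unique (G : group) (I J : Type)
    (H : I -> group) (K : J -> group) :
  trivial_centre G -> direct_decomposition G H -> direct_decomposition G K ->
  exists sigma : I -> J, bijective_map sigma /\
    forall i, group_iso (H i) (K (sigma i)).
Proof.
move=> tc [indH /restricted_sum_projections [P [DP isoH]]].
move=> [indK /restricted_sum_projections [Q [DQ isoK]]].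
have [sigma [sigma_bij isoPQ]] := projection_family_unique tc
  (fun i => indecomposable_iso (isoH i) (indH i))
  (fun j => indecomposable_iso (isoK j) (indK j)).
exists sigma; split=> // i.
exact: group_iso_trans (isoH i) (group_iso_trans (isoPQ i) (group_iso_sym (isoK _))).
Qed.

Record splitting (G : group) (p a b : G -> G) : Prop := {
  splitl_hom : is_hom a;
  splitr_hom : is_hom b;
  splitl_idem : forall x, a (a x) = a x;
  splitr_idem : forall x, b (b x) = b x;
  splitlr : forall x, a (b x) = 1;
  splitrl : forall x, b (a x) = 1;
  split_mul : forall x, p x = a x ** b x }.

Lemma splitting_of_direct_product (G : group) (p : G -> G) (pM : is_hom p)
    (G1 G2 : group) :
  (forall x, p (p x) = p x) ->
  iso_direct_product (subgroup_group (fix_subgroup pM)) G1 G2 ->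
  ~ trivial_group G1 -> ~ trivial_group G2 ->
  exists a b, [/\ splitting p a b, exists x, a x <> 1 & exists x, b x <> 1].
Proof.
move=> p_idem [f [fM /bijective_mapE [g fK gK]]] G1_nontriv G2_nontriv.
have gM u1 v1 u2 v2 : g (u1 ** u2, v1 ** v2) = g (u1, v1) ** g (u2, v2).
  by apply: (can_inj fK); rewrite fM !gK.
have gMl u1 u2 : g (u1 ** u2, 1) = g (u1, 1) ** g (u2, 1) by rewrite -gM gmul1l.
have gMr v1 v2 : g (1, v1 ** v2) = g (1, v1) ** g (1, v2) by rewrite -gM gmul1l.
have g1 : g (1, 1) = 1 by apply: (@mulg_cancl _ (g (1, 1))); rewrite -gM !gmul1r.
have f1 : f 1 = (1, 1) by rewrite -g1 gK.
pose inF x : subgroup_group (fix_subgroup pM) := exist _ (p x) (p_idem x).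
have inFM x y : inF (x ** y) = inF x ** inF y by apply: sval_inj; apply: pM.
have inFK u : inF (sval u) = u by apply: sval_inj; apply: (svalP u).
pose a x := sval (g ((f (inF x)).1, 1)).
pose b x := sval (g (1, (f (inF x)).2)).
exists a, b; split; first split.
- by move=> x y; rewrite /a inFM fM /= gMl.
- by move=> x y; rewrite /b inFM fM /= gMr.
- by move=> x; rewrite {1}/a inFK gK.
- by move=> x; rewrite {1}/b inFK gK.
- by move=> x; rewrite {1}/a inFK gK /= g1.
- by move=> x; rewrite {1}/b inFK gK /= g1.
- move=> x.
  have eq_x : inF x = g ((f (inF x)).1, 1) ** g (1, (f (inF x)).2).
    by apply: (can_inj fK); rewrite fM !gK /= gmul1l gmul1r -surjective_pairing.
  by have /(congr1 sval) := eq_x.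
- have [u nu1] := not_all_ex_not _ _ G1_nontriv.
  exists (sval (g (u, 1))); rewrite /a inFK gK /= => gu1; apply: nu1.
  have gu : g (u, 1) = 1 by apply: sval_inj.
  by have := congr1 f gu; rewrite gK f1 => [[]].
- have [v nv1] := not_all_ex_not _ _ G2_nontriv.
  exists (sval (g (1, v))); rewrite /b inFK gK /= => gv1; apply: nv1.
  have gv : g (1, v) = 1 by apply: sval_inj.
  by have := congr1 f gv; rewrite gK f1 => [[]].
Qed.

Section Splitting.
Variables (G : group) (p a b : G -> G).
Hypothesis S : splitting p a b.

Lemma splitl_proj x : a (p x) = a x.
Proof. by rewrite (split_mul S) (splitl_hom S) (splitl_idem S) (splitlr S) gmul1r. Qed.

Lemma splitr_proj x : b (p x) = b x.
Proof. by rewrite (split_mul S) (splitr_hom S) (splitr_idem S) (splitrl S) gmul1l. Qed.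

Lemma proj_splitl x : p (a x) = a x.
Proof. by rewrite (split_mul S) (splitl_idem S) (splitrl S) gmul1r. Qed.

Lemma proj_splitr x : p (b x) = b x.
Proof. by rewrite (split_mul S) (splitr_idem S) (splitlr S) gmul1l. Qed.

End Splitting.

Section SplittingInFamily.
Variables (G : group) (I : Type) (e : I -> G -> G) (k : I) (a b : G -> G).
Hypotheses (D : projection_family e) (S : splitting (e k) a b).

Lemma splitl_orth l x : l <> k -> a (e l x) = 1.
Proof.
move=> neq_lk; rewrite -(splitl_proj S) (proj_orth D) ?(hom1 (splitl_hom S)) //.
by move=> eq_kl; apply: neq_lk.
Qed.

Lemma splitr_orth l x : l <> k -> b (e l x) = 1.
Proof.
move=> neq_lk; rewrite -(splitr_proj S) (proj_orth D) ?(hom1 (splitr_hom S)) //.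
by move=> eq_kl; apply: neq_lk.
Qed.

Lemma orth_splitl l x : l <> k -> e l (a x) = 1.
Proof. by move=> neq_lk; rewrite -(proj_splitl S) (proj_orth D). Qed.

Lemma orth_splitr l x : l <> k -> e l (b x) = 1.
Proof. by move=> neq_lk; rewrite -(proj_splitr S) (proj_orth D). Qed.

End SplittingInFamily.

Record decomposition_of_size (G : group) (n : nat) (e : nat -> G -> G) : Prop := {
  dec_proj : projection_family e;
  dec_vanish : forall l x, n <= l -> e l x = 1;
  dec_nontrivial : forall l, l < n -> exists x, e l x <> 1 }.

Lemma decomposition_of_size_exists (G : group) : exists n e, @decomposition_of_size G n e.
Proof.
have [G_triv | G_nontriv] := classic (trivial_group G).
  exists 0, (fun _ _ => 1); split=> //; split=> //.
  - by move=> l x y; rewrite gmul1l.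
  - by move=> x y _; rewrite (G_triv x) (G_triv y).
exists 1%N, (fun l x => if l == 0 then x else 1); split.
- split=> [l x y | l x | l m x neq_lm | x y /(_ 0) //].
  + by case: (l == 0); rewrite ?gmul1l.
  + by case: (l == 0).
  + by case: eqP => [l0|//]; case: eqP => [m0|//]; case: neq_lm; rewrite l0 m0.
- by case.
- move=> l; rewrite ltnS leqn0 => /eqP ->.
  by have [x nx1] := not_all_ex_not _ _ G_nontriv; exists x.
Qed.

Lemma decomposition_refine (G : group) n (e : nat -> G -> G) k a b :
  decomposition_of_size n e -> k < n -> splitting (e k) a b ->
  (exists x, a x <> 1) -> (exists x, b x <> 1) ->
  decomposition_of_size n.+1 (fun l => if l == k then a else if l == n then b else e l).
Proof.
move=> [D vanish nontriv] lt_kn S a_nontriv b_nontriv.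
have neq_nk : n != k by rewrite gtn_eqF.
split; first split.
- move=> l; case: ifP => _; first exact: (splitl_hom S).
  by case: ifP => _; [exact: (splitr_hom S) | exact: (proj_hom D)].
- move=> l x; case: ifP => _; first exact: (splitl_idem S).
  by case: ifP => _; [exact: (splitr_idem S) | exact: (proj_idem D)].
- move=> l m x neq_lm.
  have [eq_lk | neq_lk] := eqVneq l k; have [eq_mk | neq_mk] := eqVneq m k.
  + by case: neq_lm; rewrite eq_lk eq_mk.
  + have [_ | _] := eqVneq m n; first exact: (splitlr S).
    by apply: (splitl_orth D S); apply/eqP.
  + have [_ | _] := eqVneq l n; first exact: (splitrl S).
    by apply: (orth_splitl D S); apply/eqP.
  + have [eq_ln | _] := eqVneq l n; have [eq_mn | _] := eqVneq m n.
    * by case: neq_lm; rewrite eq_ln eq_mn.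
    * by apply: (splitr_orth D S); apply/eqP.
    * by apply: (orth_splitr D S); apply/eqP.
    * by apply: (proj_orth D).
- move=> x y eq_xy; apply: (proj_ext D) => l.
  have [-> | neq_lk] := eqVneq l k.
    have := eq_xy k; have := eq_xy n; rewrite (negbTE neq_nk) !eqxx => eq_b eq_a.
    by rewrite !(split_mul S) eq_a eq_b.
  have [-> | neq_ln] := eqVneq l n; first by rewrite !vanish.
  by have := eq_xy l; rewrite (negbTE neq_lk) (negbTE neq_ln).
- move=> l x lt_nl; rewrite (gtn_eqF (ltn_trans lt_kn lt_nl)) (gtn_eqF lt_nl).
  exact: vanish (ltnW lt_nl).
- move=> l; rewrite ltnS leq_eqVlt => /predU1P [-> | lt_ln].
    by rewrite (negbTE neq_nk) eqxx.
  have [// | neq_lk] := eqVneq l k.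
  by rewrite (ltn_eqF lt_ln); apply: nontriv.
Qed.

Lemma decomposition_size_bound (G : group) (K : fieldType) (d : nat)
    (rho : G -> 'M[K]_d) :
  injective rho -> (forall x y, rho (x ** y) = (rho x *m rho y)%R) ->
  trivial_centre G -> forall n e, @decomposition_of_size G n e -> n <= d * d.
Proof.
move=> rho_inj rhoM tc n e [D _ nontriv].
have [st st_ok] : exists st : nat -> G * G, forall l, l < n ->
    [/\ e l (st l).1 = (st l).1, e l (st l).2 = (st l).2 & ~ gcommute (st l).1 (st l).2].
  apply: (choice (fun l (s : G * G) =>
    l < n -> [/\ e l s.1 = s.1, e l s.2 = s.2 & ~ gcommute s.1 s.2])) => l; have [lt_ln | ] := ltnP l n; last by exists (1, 1).
  have [x /(proj_noncommutative D tc) [y ncomm]] := nontriv l lt_ln.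
  by exists (e l x, e l y) => _; split=> //; apply: (proj_idem D).
apply: (@noncommuting_pairs_le_sqr K d n (fun l => rho (st l).1) (fun l => rho (st l).2)).
  move=> l m lt_ln lt_mn neq_lm; rewrite -!rhoM; congr rho.
  have [Pm _ _] := st_ok m lt_mn; have [_ Pl _] := st_ok l lt_ln.
  by rewrite -Pm -Pl; apply: (gcommute_proj D) => eq_ml; apply: neq_lm.
move=> l lt_ln comm; have [_ _] := st_ok l lt_ln; apply.
by apply: rho_inj; rewrite !rhoM.
Qed.

Lemma ex_maxn_prop (P : nat -> Prop) (B : nat) :
  (exists n, P n) -> (forall n, P n -> n <= B) ->
  exists2 n, P n & forall m, P m -> m <= n.
Proof.
pose Pb n := if excluded_middle_informative (P n) then true else false.
have PbP n : reflect (P n) (Pb n).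
  by rewrite /Pb; case: excluded_middle_informative => ?; constructor.
move=> [n0 Pn0] bounded.
have Pb_bounded m : Pb m -> m <= B by move/PbP/bounded.
case: (ex_maxnP (ex_intro Pb n0 (introT (PbP n0) Pn0)) Pb_bounded) => n /PbP Pn max_n.
by exists n => // m /PbP /max_n.
Qed.

Fixpoint gprod (G : group) (k : nat) (g : nat -> G) : G :=
  if k is k'.+1 then gprod k' g ** g k' else 1.

Lemma proj_gprod (G : group) (e : nat -> G -> G) (D : projection_family e)
    (g : nat -> G) m k :
  (forall l, e l (g l) = g l) -> e m (gprod k g) = if m < k then g m else 1.
Proof.
move=> eg; elim: k => [|k IHk] /=; first exact: proj_gone D m.
rewrite ltnS leq_eqVlt (proj_hom D) IHk; have [-> | neq_mk] := eqVneq m k.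
  by rewrite ltnn eg gmul1l.
have -> : e m (g k) = 1 by rewrite -(eg k) (proj_orth D) //; apply/eqP.
by case: (m < k); rewrite gmul1r.
Qed.

Lemma mem_In (T : eqType) (x : T) (s : seq T) : x \in s -> List.In x s.
Proof.
by elim: s => //= y s IHs; rewrite in_cons => /predU1P [-> | /IHs]; [left | right].
Qed.

Lemma decomposition_restricted_sum (G : group) n (e : nat -> G -> G)
    (Dn : decomposition_of_size n e) :
  iso_restricted_sum G (fun i : 'I_n => proj_image (dec_proj Dn) i).
Proof.
pose D := dec_proj Dn.
pose phi x (i : 'I_n) : proj_image D i := exist _ (e i x) (proj_idem D i x).
exists phi; split.
  move=> x y; apply: functional_extensionality_dep => i.
  by apply: sval_inj; apply: (proj_hom D).
split.
  move=> x y eq_xy; apply: (proj_ext D) => l.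
  have [lt_ln | le_nl] := ltnP l n; last by rewrite !(dec_vanish Dn).
  by have /(congr1 sval) := congr1 (fun f => f (Ordinal lt_ln)) eq_xy.
move=> f; split=> [_ | _]; last first.
  by exists (enum 'I_n) => i not_i; case: not_i; apply/mem_In/mem_enum.
pose g l : G := if insub l is Some i then sval (f i) else 1.
have eg l : e l (g l) = g l.
  rewrite /g; case: insubP => [i _ <- | _]; [exact: svalP (f i) | exact: proj_gone D l].
exists (gprod n g); apply: functional_extensionality_dep => i; apply: sval_inj => /=.
rewrite (proj_gprod D _ _ eg) ltn_ord /g; case: insubP => [j _ eq_ji | ]; last by rewrite ltn_ord.
by rewrite (val_inj eq_ji).
Qed.

Lemma centreless_linear_decomposition (G : group) :
  linear_group G -> trivial_centre G ->
  exists (I : Type) (H : I -> group), direct_decomposition G H.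
Proof.
move=> [K [d [rho [rho_inj [_ rhoM]]]]] tc.
have bounded n : (exists e, @decomposition_of_size G n e) -> n <= d * d.
  by case=> e De; apply: decomposition_size_bound rho_inj rhoM tc _ _ De.
have [n [e Dn] max_n] := ex_maxn_prop (decomposition_of_size_exists G) bounded.
exists 'I_n, (fun i : 'I_n => proj_image (dec_proj Dn) i).
split; last exact: decomposition_restricted_sum.
move=> i; split; first by apply/proj_image_nontrivialP; apply: (dec_nontrivial Dn).
move=> G1 G2 iso_i; apply: NNPP => /not_or_and [G1_nontriv G2_nontriv].
have [a [b [S a_nontriv b_nontriv]]] :=
  splitting_of_direct_product (proj_idem (dec_proj Dn) i) iso_i G1_nontriv G2_nontriv.
have := max_n _ (ex_intro _ _ (decomposition_refine Dn (ltn_ord i) S a_nontriv b_nontriv)).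
by rewrite ltnn.
Qed.

Theorem proposition14 (G : group) :
  linear_group G -> finitely_generated G -> trivial_centre G ->
  uniquely_directly_decomposable G.
Proof.
move=> lin _ tc; split; first exact: centreless_linear_decomposition.
by move=> I H J K; apply: direct_decomposition_unique.
Qed.
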